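(* Let $\Phi$ be a join doctrine. (a) For every $\Phi$-suplattice $X$ with least element $\bot$, $\bot$ is $\Phi$-compact iff the empty poset is not in $\Phi$; in particular this applies to $0\in\mathbb{I}$. (b) If $\omega\in\Phi$, then no $r>0$ is $\Phi$-compact in $\mathbb{I}$. If $\omega\notin\Phi$, then: (i) for every $\phi\in\Phi$ and every sequence $x_0,x_1,\dots\in\phi$ there are indices $i_0<i_1<\cdots$ such that $\{x_{i_0},x_{i_1},\dots\}$ has an upper bound in $\phi$; in particular every increasing sequence $x_0\le x_1\le\cdots$ in $\phi$ has an upper bound in $\phi$; (ii) every $\Phi$-continuous $\Phi$-suplattice $X$ which also has joins of countable increasing sequences is $\Phi$-algebraic, and the join of any sequence $x_0\ll x_1\ll\cdots$ in $X$ is $\Phi$-compact; in particular every $r>0$ is $\Phi$-compact in $\mathbb{I}$.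
   Context: A join doctrine is a class $\Phi$ of posets such that: (1) the one-element poset is in $\Phi$; (2) if a poset $P$ is the union of a set $\mathcal{S}$ of subposets each in $\Phi$ and $\mathcal{S}$ (ordered by inclusion) is in $\Phi$, then $P\in\Phi$; (3) if $f:P\to Q$ is monotone with cofinal image and $P\in\Phi$ then $Q\in\Phi$; (4) cofinal subposets of members of $\Phi$ are in $\Phi$. For a poset $X$, $\Phi(X)$ is the set of lower subsets of $X$ which, as subposets, belong to $\Phi$. A $\Phi$-join is a join of a subset belonging to $\Phi$; a $\Phi$-suplattice is a poset with all $\Phi$-joins. $\Downarrow x:=\bigcap\{\phi\in\Phi(X)\mid x\le\bigvee\phi\}$; $y\ll x$ iff $y\in\Downarrow x$; $x$ is $\Phi$-compact if $x\ll x$. $X$ is $\Phi$-continuous if for each $x$ there is $\phi\in\Phi(X)$ with $\phi\subseteq\Downarrow x$ and $x\le\bigvee\phi$; $\Phi$-algebraic if the smallest subset containing the $\Phi$-compact elements and closed under $\Phi$-joins is $X$. $\mathbb{I}=[0,1]$ with usual order; $\omega$ = natural numbers with usual order. *)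

From Stdlib Require Import Reals Lra ProofIrrelevance FunctionalExtensionality PropExtensionality.
Open Scope R_scope.

Record poset := Poset {
  car :> Type;
  le : car -> car -> Prop;
  le_refl : forall x, le x x;
  le_trans : forall x y z, le x y -> le y z -> le x z;
  le_antisym : forall x y, le x y -> le y x -> x = y
}.
Arguments le {p} _ _.

Definition sub (P : poset) (A : P -> Prop) : poset.
Proof.
  refine (@Poset {x : P | A x} (fun a b => le (proj1_sig a) (proj1_sig b)) _ _ _).
  - intros [x hx]; apply le_refl.
  - intros [x hx] [y hy] [z hz]; simpl; apply le_trans.
  - intros [x hx] [y hy]; simpl; intros h1 h2.
    pose proof (le_antisym _ x y h1 h2) as e; subst y.
    f_equal; apply proof_irrelevance.
Defined.

Definition incl_poset (P : poset) (S : (P -> Prop) -> Prop) : poset.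
Proof.
  refine (@Poset {A : P -> Prop | S A}
            (fun A B => forall x, proj1_sig A x -> proj1_sig B x) _ _ _).
  - intros [A hA] x h; exact h.
  - intros [A hA] [B hB] [C hC]; simpl; auto.
  - intros [A hA] [B hB]; simpl; intros h1 h2.
    assert (e : A = B).
    { apply functional_extensionality; intro x;
      apply propositional_extensionality; split; auto. }
    subst B; f_equal; apply proof_irrelevance.
Defined.

Definition one_poset : poset.
Proof.
  refine (@Poset unit (fun _ _ => True) _ _ _); auto.
  intros [] [] _ _; reflexivity.
Defined.

Definition empty_poset : poset.
Proof.
  refine (@Poset Empty_set (fun _ _ => True) _ _ _); auto.
  intros [].
Defined.

Definition omega : poset.
Proof.
  refine (@Poset nat Nat.le _ _ _).
  - intros; apply Nat.le_refl.
  - intros x y z; apply Nat.le_trans.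
  - intros x y; apply Nat.le_antisymm.
Defined.

Definition unit_interval : poset.
Proof.
  refine (@Poset {r : R | 0 <= r <= 1} (fun a b => proj1_sig a <= proj1_sig b) _ _ _).
  - intros [r hr]; simpl; lra.
  - intros [x hx] [y hy] [z hz]; simpl; lra.
  - intros [x hx] [y hy]; simpl; intros h1 h2.
    assert (e : x = y) by lra. subst y; f_equal; apply proof_irrelevance.
Defined.

Definition cofinal (P : poset) (A : P -> Prop) : Prop :=
  forall x : P, exists y, A y /\ le x y.

Definition monotone (P Q : poset) (f : P -> Q) : Prop :=
  forall x y, le x y -> le (f x) (f y).

Record join_doctrine (Phi : poset -> Prop) : Prop := {
  jd_one : Phi one_poset;
  jd_union : forall (P : poset) (S : (P -> Prop) -> Prop),
      (forall x : P, exists A, S A /\ A x) ->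
      (forall A, S A -> Phi (sub P A)) ->
      Phi (incl_poset P S) -> Phi P;
  jd_image : forall (P Q : poset) (f : P -> Q),
      monotone P Q f -> (forall y : Q, exists x, le y (f x)) -> Phi P -> Phi Q;
  jd_cofinal : forall (P : poset) (A : P -> Prop),
      cofinal P A -> Phi P -> Phi (sub P A)
}.

Definition lower_set (X : poset) (A : X -> Prop) : Prop :=
  forall x y : X, A y -> le x y -> A x.

Definition PhiX (Phi : poset -> Prop) (X : poset) (A : X -> Prop) : Prop :=
  lower_set X A /\ Phi (sub X A).

Definition is_join (X : poset) (A : X -> Prop) (s : X) : Prop :=
  (forall a, A a -> le a s) /\ (forall u, (forall a, A a -> le a u) -> le s u).

Definition Phi_suplattice (Phi : poset -> Prop) (X : poset) : Prop :=
  forall A : X -> Prop, Phi (sub X A) -> exists s, is_join X A s.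

Definition way_below (Phi : poset -> Prop) (X : poset) (y x : X) : Prop :=
  forall A : X -> Prop, PhiX Phi X A ->
    forall s, is_join X A s -> le x s -> A y.

Definition Phi_compact (Phi : poset -> Prop) (X : poset) (x : X) : Prop :=
  way_below Phi X x x.

Definition Phi_continuous (Phi : poset -> Prop) (X : poset) : Prop :=
  forall x : X, exists A : X -> Prop, PhiX Phi X A /\
    (forall y, A y -> way_below Phi X y x) /\
    (exists s, is_join X A s /\ le x s).

(** The smallest subset containing the Φ-compact elements and closed under
    Φ-joins is X: every such subset is all of X. *)
Definition Phi_algebraic (Phi : poset -> Prop) (X : poset) : Prop :=
  forall C : X -> Prop,
    (forall x, Phi_compact Phi X x -> C x) ->
    (forall (A : X -> Prop) s, (forall a, A a -> C a) -> Phi (sub X A) ->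
        is_join X A s -> C s) ->
    forall x, C x.

Definition has_least (X : poset) : Prop := exists b : X, forall x, le b x.

Definition I0 : unit_interval := exist (fun r => 0 <= r <= 1) 0 ltac:(split; lra).

(* (a) A nonempty lower set contains the least element, so bot is Phi-compact exactly
   when no lower Phi-set is empty, and an empty subposet is in Phi iff the empty poset is.

   (b) If omega is in Phi, the lower set [0, r) of the unit interval is a monotone
   cofinal image of omega whose join is r, yet it misses r.  If omega is not in Phi and
   x_0, x_1, ... lie in a Phi-poset P, some u in P lies above infinitely many x_n:
   otherwise u |-> (least bound on the indices n with x_n <= u) would be a monotone
   cofinal map P -> omega.  Hence a lower Phi-set containing a chain x_0 << x_1 << ...
   contains an upper bound of it, so also its join, which is therefore compact.  In a
   continuous X interpolation yields such chains from any y << x to below x, so the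
   compact elements way below x are cofinal among all elements way below x, whose join
   is x. *)

From Stdlib Require Import Reals Lra Lia Classical ClassicalEpsilon ChoiceFacts Wf_nat
  FunctionalExtensionality PropExtensionality.
Open Scope R_scope.

Lemma dependent_choice (A : Type) (R : A -> A -> Prop) :
  (forall a, exists b, R a b) -> forall a0 : A,
  exists f : nat -> A, f O = a0 /\ forall n, R (f n) (f (S n)).
Proof. exact (@functional_choice_imp_functional_dependent_choice choice A R). Qed.

Lemma strictly_increasing_enumeration (Q : nat -> Prop) :
  (forall m, exists n, (m <= n)%nat /\ Q n) ->
  exists i : nat -> nat, (forall n, (i n < i (S n))%nat) /\ forall n, Q (i n).
Proof.
  intros HQ. destruct (HQ O) as [n0 [_ Hn0]].
  destruct (dependent_choice {n | Q n} (fun a b => proj1_sig a < proj1_sig b)%nat)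
    with (a0 := exist Q n0 Hn0) as [f [_ Hf]].
  - intros a. destruct (HQ (S (proj1_sig a))) as [b [Hab Hb]].
    exists (exist Q b Hb); simpl; lia.
  - exists (fun n => proj1_sig (f n)). split; [exact Hf | intro n; exact (proj2_sig (f n))].
Qed.

Lemma strictly_increasing_ge (i : nat -> nat) :
  (forall n, (i n < i (S n))%nat) -> forall n, (n <= i n)%nat.
Proof. intros Hi n; induction n; [lia | specialize (Hi n); lia]. Qed.

Lemma increasing_le (P : poset) (x : nat -> P) :
  (forall n, le (x n) (x (S n))) -> forall n m, (n <= m)%nat -> le (x n) (x m).
Proof.
  intros Hx n m Hnm; induction Hnm; [apply le_refl | eapply le_trans; eauto].
Qed.

Definition lower_approx (r : R) (n : nat) : R := r - r / INR (S n).

Lemma lower_approx_bounds (r : R) (n : nat) : 0 <= r -> 0 <= lower_approx r n <= r.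
Proof.
  intros Hr; unfold lower_approx.
  assert (HSn : 1 <= INR (S n)) by (apply (le_INR 1); lia).
  assert (r / INR (S n) <= r).
  { unfold Rdiv; rewrite <- (Rmult_1_r r) at 2. apply Rmult_le_compat_l; [lra|].
    rewrite <- Rinv_1; apply Rinv_le_contravar; lra. }
  assert (0 <= r / INR (S n)).
  { apply Rmult_le_pos; [lra | left; apply Rinv_0_lt_compat; lra]. }
  lra.
Qed.

Lemma lower_approx_lt (r : R) (n : nat) : 0 < r -> lower_approx r n < r.
Proof.
  intros Hr; unfold lower_approx.
  assert (0 < r / INR (S n)) by (apply Rdiv_lt_0_compat; [lra | apply lt_0_INR; lia]).
  lra.
Qed.

Lemma lower_approx_le_compat (r : R) (n m : nat) :
  0 <= r -> (n <= m)%nat -> lower_approx r n <= lower_approx r m.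
Proof.
  intros Hr Hnm; unfold lower_approx.
  assert (r / INR (S m) <= r / INR (S n)).
  { apply Rmult_le_compat_l; [lra|].
    apply Rinv_le_contravar; [apply lt_0_INR; lia | apply le_INR; lia]. }
  lra.
Qed.

Lemma lower_approx_gt (r y : R) : y < r -> exists n, y < lower_approx r n.
Proof.
  intros Hyr. destruct (INR_archimed (r - y) r) as [n Hn]; [lra|].
  exists n; unfold lower_approx.
  assert (HSn : INR (S n) = INR n + 1) by apply S_INR.
  assert (0 <= INR n) by apply pos_INR.
  assert (r / INR (S n) < r - y).
  { apply (Rmult_lt_reg_r (INR (S n))); [lra|].
    unfold Rdiv; rewrite Rmult_assoc, Rinv_l by lra. nra. }
  lra.
Qed.

Lemma lower_approx_in_unit (r : unit_interval) (n : nat) :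
  0 <= lower_approx (proj1_sig r) n <= 1.
Proof.
  destruct r as [v Hv]; simpl. pose proof (lower_approx_bounds v n (proj1 Hv)). lra.
Qed.

Definition approx_pt (r : unit_interval) (n : nat) : unit_interval :=
  exist _ (lower_approx (proj1_sig r) n) (lower_approx_in_unit r n).

Lemma unit_interval_joins (A : unit_interval -> Prop) : exists s, is_join unit_interval A s.
Proof.
  destruct (classic (exists a, A a)) as [[a Ha]|Hempty].
  - set (E := fun v => exists p : unit_interval, A p /\ proj1_sig p = v).
    destruct (completeness E) as [m [Hub Hleast]].
    + exists 1. intros v [[q Hq] [_ <-]]. simpl; lra.
    + exists (proj1_sig a), a; auto.
    + assert (Hm : 0 <= m <= 1).
      { split.
        - destruct a as [q Hq]. assert (Hq' : E q) by (exists (exist _ q Hq); auto).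
          specialize (Hub q Hq'). simpl in *; lra.
        - apply Hleast. intros v [[q Hq] [_ <-]]. simpl; lra. }
      exists (exist _ m Hm). split.
      * intros p Hp. apply Hub. exists p; auto.
      * intros u Hu. apply Hleast. intros v [p [Hp <-]]. apply (Hu p Hp).
  - exists I0. split.
    + intros p Hp; exfalso; apply Hempty; eauto.
    + intros [u Hu] _. simpl. lra.
Qed.

Lemma I0_le (x : unit_interval) : le I0 x.
Proof. destruct x as [v Hv]; simpl; lra. Qed.

Lemma unit_interval_lt_join (r : unit_interval) : 0 < proj1_sig r ->
  is_join unit_interval (fun p => proj1_sig p < proj1_sig r) r.
Proof.
  intros Hr; split.
  - intros p Hp; simpl; lra.
  - intros u Hu. simpl. apply Rnot_lt_le; intros Hur.
    destruct (lower_approx_gt _ _ Hur) as [n Hn].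
    specialize (Hu (approx_pt r n) (lower_approx_lt _ n Hr)). simpl in Hu. lra.
Qed.

Section JoinDoctrine.
Variable Phi : poset -> Prop.
Hypothesis HPhi : join_doctrine Phi.

Lemma Phi_empty_iff (P : poset) : (P -> False) -> (Phi P <-> Phi empty_poset).
Proof.
  intros HP; split.
  - apply (jd_image _ HPhi P empty_poset (fun p => match HP p with end)).
    + intros p; destruct (HP p).
    + intros [].
  - apply (jd_image _ HPhi empty_poset P (fun e => match e with end)).
    + intros [].
    + intros p; destruct (HP p).
Qed.

Lemma bottom_compact_iff (X : poset) (bot : X) :
  Phi_suplattice Phi X -> (forall x, le bot x) ->
  (Phi_compact Phi X bot <-> ~ Phi empty_poset).
Proof.
  intros HX Hbot; split.
  - intros Hc Hempty.
    assert (H0 : Phi (sub X (fun _ => False))).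
    { apply (Phi_empty_iff (sub X (fun _ => False))); [exact (@proj2_sig _ _) | exact Hempty]. }
    destruct (HX _ H0) as [s Hs].
    exact (Hc (fun _ => False) (conj (fun _ _ h _ => h) H0) s Hs (Hbot s)).
  - intros Hempty A [Hlow HA] s _ _.
    apply NNPP; intros HnA. apply Hempty.
    apply (Phi_empty_iff (sub X A)); [|exact HA].
    intros [a Ha]. exact (HnA (Hlow bot a Ha (Hbot a))).
Qed.

Lemma principal_PhiX (X : poset) (x : X) : PhiX Phi X (fun z => le z x).
Proof.
  split.
  - intros a b Hb Hab; eapply le_trans; eauto.
  - apply (jd_image _ HPhi one_poset (sub X (fun z => le z x))
      (fun _ => exist (fun z => le z x) x (le_refl _ x))).
    + intros _ _ _; apply le_refl.
    + intros [y Hy]; exists tt; exact Hy.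
    + apply (jd_one _ HPhi).
Qed.

Lemma principal_join (X : poset) (x : X) : is_join X (fun z => le z x) x.
Proof. split; auto. intros u Hu; apply Hu, le_refl. Qed.

Lemma way_below_le (X : poset) (y x : X) : way_below Phi X y x -> le y x.
Proof.
  intros Hyx. exact (Hyx _ (principal_PhiX X x) x (principal_join X x) (le_refl _ x)).
Qed.

Lemma way_below_le_r (X : poset) (y x x' : X) :
  way_below Phi X y x -> le x x' -> way_below Phi X y x'.
Proof. intros Hyx Hxx' A HA s Hs Hx's. apply (Hyx A HA s Hs). eapply le_trans; eauto. Qed.

Lemma le_way_below_l (X : poset) (y' y x : X) :
  le y' y -> way_below Phi X y x -> way_below Phi X y' x.
Proof.
  intros Hy'y Hyx A HA s Hs Hxs. exact (proj1 HA y' y (Hyx A HA s Hs Hxs) Hy'y).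
Qed.

Lemma continuous_way_below_set (X : poset) (x : X) :
  Phi_continuous Phi X ->
  PhiX Phi X (fun y => way_below Phi X y x) /\ is_join X (fun y => way_below Phi X y x) x.
Proof.
  intros Hcont. destruct (Hcont x) as [A [HA [HAx [s [Hs Hxs]]]]].
  assert (HAeq : A = (fun y => way_below Phi X y x)).
  { apply functional_extensionality; intros y; apply propositional_extensionality; split.
    - apply HAx.
    - intros Hyx; exact (Hyx A HA s Hs Hxs). }
  subst A. split; [exact HA|].
  assert (Hsx : le s x) by (apply Hs; intros a; apply way_below_le).
  rewrite (le_antisym _ s x Hsx Hxs) in Hs. exact Hs.
Qed.

Lemma Phi_sub_sub_of_sub (X : poset) (U A : X -> Prop) : (forall z, A z -> U z) ->
  Phi (sub X A) -> Phi (sub (sub X U) (fun p => A (proj1_sig p))).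
Proof.
  intros HAU. apply (jd_image _ HPhi (sub X A) (sub (sub X U) (fun p => A (proj1_sig p)))
    (fun a => exist (fun p : sub X U => A (proj1_sig p))
                (exist U (proj1_sig a) (HAU _ (proj2_sig a))) (proj2_sig a))).
  - intros a b Hab; exact Hab.
  - intros [[z Hz] Haz]. exists (exist A z Haz). simpl. apply le_refl.
Qed.

Lemma Phi_sub_of_sub_sub (X : poset) (U A : X -> Prop) : (forall z, A z -> U z) ->
  Phi (sub (sub X U) (fun p => A (proj1_sig p))) -> Phi (sub X A).
Proof.
  intros HAU. apply (jd_image _ HPhi (sub (sub X U) (fun p => A (proj1_sig p))) (sub X A)
    (fun p => exist A (proj1_sig (proj1_sig p)) (proj2_sig p))).
  - intros p q Hpq; exact Hpq.
  - intros [z Haz]. exists (exist _ (exist U z (HAU z Haz)) Haz). apply le_refl.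
Qed.

Lemma Phi_sub_cofinal (X : poset) (D K : X -> Prop) : (forall z, K z -> D z) ->
  (forall z, D z -> exists k, K k /\ le z k) -> Phi (sub X D) -> Phi (sub X K).
Proof.
  intros HKD Hcof HD. apply (Phi_sub_of_sub_sub X D K HKD).
  apply (jd_cofinal _ HPhi (sub X D) (fun p => K (proj1_sig p))); [|exact HD].
  intros [z Hz]. destruct (Hcof z Hz) as [k [Hk Hzk]].
  exists (exist D k (HKD k Hk)). split; [exact Hk | exact Hzk].
Qed.

(* Union axiom: the pieces are the way-below sets of the b way below x, indexed by the
   image of the Phi-set of those b under the monotone map b |-> way-below set of b. *)
Lemma Phi_union_way_below (X : poset) (x : X) : Phi_continuous Phi X ->
  Phi (sub X (fun z => exists b, way_below Phi X b x /\ way_below Phi X z b)).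
Proof.
  intros Hcont.
  set (U := fun z => exists b, way_below Phi X b x /\ way_below Phi X z b).
  set (S := fun T : sub X U -> Prop => exists b, way_below Phi X b x /\
              T = (fun p => way_below Phi X (proj1_sig p) b)).
  apply (jd_union _ HPhi (sub X U) S).
  - intros [z [b [Hbx Hzb]]]. exists (fun p => way_below Phi X (proj1_sig p) b).
    split; [exists b; split; auto | exact Hzb].
  - intros T [b [Hbx ->]].
    apply (Phi_sub_sub_of_sub X U (fun z => way_below Phi X z b)).
    + intros z Hzb; exists b; auto.
    + apply (continuous_way_below_set X b Hcont).
  - apply (jd_image _ HPhi (sub X (fun b => way_below Phi X b x)) (incl_poset (sub X U) S)
      (fun b => exist S (fun p => way_below Phi X (proj1_sig p) (proj1_sig b))
                   (ex_intro _ (proj1_sig b) (conj (proj2_sig b) eq_refl)))).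
    + intros b b' Hbb' p Hp; simpl in *. eapply way_below_le_r; eauto.
    + intros [T [b [Hbx HT]]]. exists (exist _ b Hbx). simpl. subst T. auto.
    + apply (continuous_way_below_set X x Hcont).
Qed.

Lemma way_below_interpolation (X : poset) (y x : X) :
  Phi_suplattice Phi X -> Phi_continuous Phi X -> way_below Phi X y x ->
  exists b, way_below Phi X y b /\ way_below Phi X b x.
Proof.
  intros HX Hcont Hyx.
  set (U := fun z => exists b, way_below Phi X b x /\ way_below Phi X z b).
  destruct (HX U (Phi_union_way_below X x Hcont)) as [t Ht].
  assert (Hxt : le x t).
  { apply (proj2 (continuous_way_below_set X x Hcont)). intros b Hbx.
    apply (proj2 (continuous_way_below_set X b Hcont)). intros a Hab.
    apply Ht. exists b; auto. }
  assert (HU : PhiX Phi X U).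
  { split; [|exact (Phi_union_way_below X x Hcont)].
    intros a z [b [Hbx Hzb]] Haz. exists b; split; [exact Hbx | eapply le_way_below_l; eauto]. }
  destruct (Hyx U HU t Ht Hxt) as [b [Hbx Hyb]]. exists b; auto.
Qed.

Lemma Phi_omega_of_finitely_many_below (P : poset) (x : nat -> P) :
  Phi P -> (forall u : P, exists m, forall n, le (x n) u -> (n < m)%nat) -> Phi omega.
Proof.
  intros HP Hfin.
  set (bound u m := forall n, le (x n) u -> (n < m)%nat).
  assert (Hleast : forall u : P, exists m, bound u m /\ forall k, bound u k -> (m <= k)%nat).
  { intros u. destruct (dec_inh_nat_subset_has_unique_least_element (bound u)
      (fun m => classic (bound u m)) (Hfin u)) as [m [Hm _]]. exists m; exact Hm. }
  destruct (choice _ Hleast) as [f Hf].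
  apply (jd_image _ HPhi P omega f); [| |exact HP].
  - intros u v Huv. apply (proj2 (Hf u)). intros n Hn.
    apply (proj1 (Hf v)). eapply le_trans; eauto.
  - intros k. exists (x k). simpl. pose proof (proj1 (Hf (x k)) k (le_refl _ _)). lia.
Qed.

Section OmegaNotInPhi.
Hypothesis Homega : ~ Phi omega.

Lemma subsequence_bounded (P : poset) : Phi P -> forall x : nat -> P,
  exists i : nat -> nat, (forall n, (i n < i (S n))%nat) /\
    exists u : P, forall n, le (x (i n)) u.
Proof.
  intros HP x.
  destruct (classic (exists u : P, forall m, exists n, (m <= n)%nat /\ le (x n) u))
    as [[u Hu]|Hnone].
  - destruct (strictly_increasing_enumeration _ Hu) as [i [Hi Hiu]].
    exists i; split; [exact Hi | exists u; exact Hiu].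
  - exfalso; apply Homega, (Phi_omega_of_finitely_many_below P x HP).
    intros u. apply NNPP; intros Hinf. apply Hnone; exists u; intros m.
    apply NNPP; intros Hm. apply Hinf; exists m; intros n Hn.
    apply Nat.nle_gt; intros Hmn; apply Hm; exists n; auto.
Qed.

Lemma increasing_bounded (P : poset) : Phi P -> forall x : nat -> P,
  (forall n, le (x n) (x (S n))) -> exists u : P, forall n, le (x n) u.
Proof.
  intros HP x Hx. destruct (subsequence_bounded P HP x) as [i [Hi [u Hu]]].
  exists u; intros n. eapply le_trans; [|apply Hu].
  apply increasing_le; [exact Hx | apply strictly_increasing_ge, Hi].
Qed.

Lemma way_below_chain_join_compact (X : poset) (x : nat -> X) :
  (forall n, way_below Phi X (x n) (x (S n))) -> forall s,
  is_join X (fun y => exists n, y = x n) s -> Phi_compact Phi X s.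
Proof.
  intros Hx s Hs A HA t Ht Hst.
  assert (HAx : forall n, A (x n)).
  { intros n. apply (Hx n A HA t Ht). eapply le_trans; [|exact Hst].
    apply Hs. exists (S n); reflexivity. }
  destruct HA as [Hlow HPA].
  destruct (increasing_bounded (sub X A) HPA (fun n => exist A (x n) (HAx n)))
    as [[u Hu] Hxu].
  - intros n; exact (way_below_le X _ _ (Hx n)).
  - apply (Hlow s u Hu). apply Hs. intros a [n ->]. apply (Hxu n).
Qed.

Section ContinuousSuplattice.
Variable X : poset.
Hypothesis HX : Phi_suplattice Phi X.
Hypothesis Hcont : Phi_continuous Phi X.
Hypothesis Hchain : forall c : nat -> X, (forall n, le (c n) (c (S n))) ->
  exists s, is_join X (fun z => exists n, z = c n) s.

Lemma compact_between (y x : X) : way_below Phi X y x ->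
  exists c, Phi_compact Phi X c /\ le y c /\ way_below Phi X c x.
Proof.
  intros Hyx.
  destruct (dependent_choice (sub X (fun z => way_below Phi X z x))
    (fun a b => way_below Phi X (proj1_sig a) (proj1_sig b)))
    with (a0 := exist (fun z => way_below Phi X z x) y Hyx) as [f [Hf0 Hf]].
  - intros [a Hax]. destruct (way_below_interpolation X a x HX Hcont Hax) as [b [Hab Hbx]].
    exists (exist _ b Hbx); exact Hab.
  - set (c n := proj1_sig (f n)).
    destruct (Hchain c) as [s Hs]; [intros n; apply way_below_le, Hf|].
    assert (Hsx : le s x).
    { apply Hs. intros a [n ->]. apply way_below_le, (proj2_sig (f n)). }
    assert (Hcomp : Phi_compact Phi X s) by exact (way_below_chain_join_compact X c Hf s Hs).
    exists s; split; [exact Hcomp | split; [|exact (way_below_le_r X s s x Hcomp Hsx)]].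
    replace y with (c O) by (unfold c; rewrite Hf0; reflexivity).
    apply Hs; exists O; reflexivity.
Qed.

Lemma continuous_algebraic : Phi_algebraic Phi X.
Proof.
  intros C Hcomp Hjoin x.
  destruct (continuous_way_below_set X x Hcont) as [[_ HD] Hx].
  set (K := fun c => way_below Phi X c x /\ Phi_compact Phi X c).
  apply (Hjoin K x); [intros c [_ Hc]; exact (Hcomp c Hc) | |].
  - apply (Phi_sub_cofinal X (fun z => way_below Phi X z x) K); [now intros z [] | | exact HD].
    intros z Hzx. destruct (compact_between z x Hzx) as [c [Hc [Hzc Hcx]]].
    exists c; repeat split; auto.
  - split; [intros c [Hcx _]; apply way_below_le, Hcx|].
    intros u Hu. apply Hx. intros z Hzx.
    destruct (compact_between z x Hzx) as [c [Hc [Hzc Hcx]]].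
    eapply le_trans; [exact Hzc|]. apply Hu. split; assumption.
Qed.

End ContinuousSuplattice.
End OmegaNotInPhi.

Lemma unit_interval_not_compact (r : unit_interval) :
  Phi omega -> 0 < proj1_sig r -> ~ Phi_compact Phi unit_interval r.
Proof.
  intros Homega Hr Hc.
  set (A := fun p : unit_interval => proj1_sig p < proj1_sig r).
  assert (HA : PhiX Phi unit_interval A).
  { split.
    - intros p q Hq Hpq; unfold A in *; simpl in Hpq; lra.
    - apply (jd_image _ HPhi omega (sub unit_interval A)
        (fun n => exist A (approx_pt r n) (lower_approx_lt _ n Hr))); [| |exact Homega].
      + intros n m Hnm. apply lower_approx_le_compat; [apply (proj2_sig r) | exact Hnm].
      + intros [p Hp]. destruct (lower_approx_gt _ _ Hp) as [n Hn]. exists n. simpl. lra. }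
  exact (Rlt_irrefl _ (Hc A HA r (unit_interval_lt_join r Hr) (le_refl _ r))).
Qed.

(* If r is not in A, then A lies in [0, r) and has points above each lower_approx r n;
   an upper bound in A of a subsequence of them is then not below r. *)
Lemma unit_interval_compact (r : unit_interval) :
  ~ Phi omega -> 0 < proj1_sig r -> Phi_compact Phi unit_interval r.
Proof.
  intros Homega Hr A [Hlow HA] t Ht Hrt.
  apply NNPP; intros HnA.
  assert (HAr : forall a, A a -> proj1_sig a < proj1_sig r).
  { intros a Ha. apply Rnot_le_lt; intros Hra. exact (HnA (Hlow r a Ha Hra)). }
  assert (Happrox : forall n, exists a : sub unit_interval A,
             lower_approx (proj1_sig r) n < proj1_sig (proj1_sig a)).
  { intros n. apply NNPP; intros Hn.
    assert (Htn : le t (approx_pt r n)).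
    { apply Ht. intros a Ha. simpl. apply Rnot_lt_le; intros Hlt.
      apply Hn. exists (exist A a Ha); exact Hlt. }
    simpl in Hrt, Htn. pose proof (lower_approx_lt _ n Hr). lra. }
  destruct (choice _ Happrox) as [a Ha].
  destruct (subsequence_bounded Homega _ HA a) as [i [Hi [[u Hu] Hau]]].
  destruct (lower_approx_gt _ _ (HAr u Hu)) as [n Hn].
  specialize (Ha (i n)); specialize (Hau n); simpl in Hau.
  pose proof (lower_approx_le_compat (proj1_sig r) n (i n) (proj1 (proj2_sig r))
                (strictly_increasing_ge i Hi n)).
  revert Ha Hau; destruct (a (i n)) as [[v Hv] Hav]; simpl; lra.
Qed.

End JoinDoctrine.

Theorem proposition2p12 (Phi : poset -> Prop) (HPhi : join_doctrine Phi) :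
  (* (a) *)
  ((forall (X : poset) (bot : X), Phi_suplattice Phi X ->
      (forall x, le bot x) ->
      (Phi_compact Phi X bot <-> ~ Phi empty_poset)) /\
   (Phi_compact Phi unit_interval I0 <-> ~ Phi empty_poset)) /\
  (* (b), case omega ∈ Φ *)
  (Phi omega ->
     forall r : unit_interval, 0 < proj1_sig r -> ~ Phi_compact Phi unit_interval r) /\
  (* (b), case omega ∉ Φ *)
  (~ Phi omega ->
     (* (i) *)
     ((forall (P : poset), Phi P -> forall x : nat -> P,
         exists i : nat -> nat, (forall n, (i n < i (S n))%nat) /\
           exists u : P, forall n, le (x (i n)) u) /\
      (forall (P : poset), Phi P -> forall x : nat -> P,
         (forall n, le (x n) (x (S n))) -> exists u : P, forall n, le (x n) u)) /\
     (* (ii) *)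
     ((forall X : poset, Phi_suplattice Phi X -> Phi_continuous Phi X ->
         (forall x : nat -> X, (forall n, le (x n) (x (S n))) ->
            exists s, is_join X (fun y => exists n, y = x n) s) ->
         Phi_algebraic Phi X /\
         (forall x : nat -> X, (forall n, way_below Phi X (x n) (x (S n))) ->
            forall s, is_join X (fun y => exists n, y = x n) s -> Phi_compact Phi X s)) /\
      (forall r : unit_interval, 0 < proj1_sig r -> Phi_compact Phi unit_interval r))).
Proof.
  split; [split | split].
  - intros X bot HX Hbot. exact (bottom_compact_iff Phi HPhi X bot HX Hbot).
  - apply (bottom_compact_iff Phi HPhi); [intros A _; apply unit_interval_joins | apply I0_le].
  - intros Homega r. exact (unit_interval_not_compact Phi HPhi r Homega).
  - intros Homega; split; [split | split].
    + exact (subsequence_bounded Phi HPhi Homega).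
    + exact (increasing_bounded Phi HPhi Homega).
    + intros X HX Hcont Hchain. split.
      * exact (continuous_algebraic Phi HPhi Homega X HX Hcont Hchain).
      * exact (way_below_chain_join_compact Phi HPhi Homega X).
    + intros r. exact (unit_interval_compact Phi HPhi r Homega).
Qed.
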